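(* Let $f:V\to W$ be as in the context (with $n+1\ge 4$, $b\neq 0$, $c\neq 0$, and $A$ the companion matrix of the minimal polynomial over $\mathbb{F}_p$ of a primitive element of $\mathrm{GF}(p^n)$). Then the group $$G=\{g\in \mathrm{GL}(V) : (vg)f=(vf)\widehat{g}\ \text{for all } v\in V\}$$ is trivial, i.e. $G=\{1\}$.
   Context: Let $p$ be a prime, $\mathbb{F}=\mathrm{GF}(p)$, and $n\ge 3$. Let $V$ be an $\mathbb{F}$-vector space of dimension $n+1$ with basis $v_0,v_1,\dots,v_n$, and let $U=\langle v_1,\dots,v_n\rangle$. Let $W=\Lambda^2V$ be the exterior square, with ordered basis beginning $v_0\wedge v_1,\dots,v_0\wedge v_n$ and continuing with the $v_i\wedge v_j$, $1\le i<j\le n$ (in a fixed order). Maps are written on the right and vectors are row vectors. For $g\in\mathrm{End}(V)$, $\widehat{g}$ denotes the induced linear map of $W$, $(x\wedge y)\widehat g=(xg)\wedge(yg)$. The linear map $f:V\to W$ has, with respect to these bases, block matrix $\begin{bmatrix} b & c\\ A & 0\end{bmatrix}$, i.e. $v_0f=\sum_{i=1}^n b_i\, v_0\wedge v_i+\sum_{1\le j<k\le n}c_{j,k}\, v_j\wedge v_k$ and $v_if=\sum_{j=1}^n A_{i,j}\, v_0\wedge v_j$ for $1\le i\le n$, where $b\in\mathbb{F}^{n}$ is a nonzero row vector, $c\in\mathbb{F}^{\binom n2}$ is a nonzero row vector, and $A$ is the $n\times n$ companion matrix of the minimal polynomial $m$ over $\mathbb{F}$ of a primitive element $\alpha$ (generator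 of the multiplicative group) of $\mathrm{GF}(p^n)$. *)

From HB Require Import structures.
From mathcomp Require Import all_boot all_order all_algebra all_field.
Set Implicit Arguments. Unset Strict Implicit. Unset Printing Implicit Defensive.
Import GRing.Theory.
Local Open Scope ring_scope.

(* Strictly increasing pairs (i, j), i < j, of indices in 'I_k: the index set
   of the standard basis v_i /\ v_j of the exterior square of F^k. *)
Notation spair k := {q : 'I_k * 'I_k | (q.1 < q.2)%N}.

(* Lambda^2 of F^k, as coordinate functions on the basis v_i /\ v_j, i<j. *)
Notation ext2 F k := {ffun spair k -> F}.

Definition wedge (F : fieldType) (k : nat) (x y : 'rV[F]_k) : ext2 F k :=
  [ffun q : spair k => x 0 (val q).1 * y 0 (val q).2 - x 0 (val q).2 * y 0 (val q).1].

Definition escale (F : fieldType) (k : nat) (a : F) (w : ext2 F k) : ext2 F k :=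
  [ffun q => a * w q].

Definition bvec (F : fieldType) (k : nat) (i : 'I_k) : 'rV[F]_k := delta_mx 0 i.
Arguments bvec {F k} i.

(* The induced map g^ on Lambda^2 V: (v_i /\ v_j) g^ = (v_i g) /\ (v_j g),
   extended linearly (maps on the right, row i of g is v_i g). *)
Notation "a `*e` w" := (escale a w) (at level 40).

Definition hatmap (F : fieldType) (k : nat) (g : 'M[F]_k) (w : ext2 F k) : ext2 F k :=
  \sum_(q : spair k) w q `*e` wedge (row (val q).1 g) (row (val q).2 g).

(* The map f : V -> W on basis vectors, V = F^(n+1) with basis v_0, ..., v_n,
   where v_0 is index ord0 and v_i (1<=i<=n) is index lift ord0 (i-1). *)
Definition fbasis (F : fieldType) (n : nat) (b : 'rV[F]_n) (c : {ffun spair n -> F})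
  (A : 'M[F]_n) (k : 'I_n.+1) : ext2 F n.+1 :=
  match unlift ord0 k with
  | None =>
      \sum_(i < n) b 0 i `*e` wedge (bvec ord0) (bvec (lift ord0 i))
      + \sum_(q : spair n) c q `*e` wedge (bvec (lift ord0 (val q).1)) (bvec (lift ord0 (val q).2))
  | Some i => \sum_(j < n) A i j `*e` wedge (bvec ord0) (bvec (lift ord0 j))
  end.

Definition fmap (F : fieldType) (n : nat) (b : 'rV[F]_n) (c : {ffun spair n -> F})
  (A : 'M[F]_n) (v : 'rV[F]_n.+1) : ext2 F n.+1 :=
  \sum_(k < n.+1) v 0 k `*e` fbasis b c A k.

(* Split [V = <v_0> (+) U]. At [v \in U], the [U /\ U]-components of the identity say that
   the [U]-part of [v_0 g] wedged with any vector of [U] is a multiple of [c]; as [n >= 3]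
   that part vanishes, and then [c != 0] forces [(v_i g)_0 = 0] for [i >= 1]. So [g] is
   block diagonal, [g = lam (+) B], and the [v_0 /\ U]-components give [B A = lam A B] and
   [b B = b]. Hence [m] annihilates [lam A], so [lam alpha] is a conjugate [alpha ^+ (p ^ k)]
   of [alpha], and primitivity of [alpha] forces [lam = 1]. Finally [B] commutes with [A],
   every nonzero vector is cyclic for [A] since [m] is irreducible, and [B] fixes [b != 0],
   so [B = 1]. *)

From HB Require Import structures.
From mathcomp Require Import all_boot all_order all_algebra all_field ring zify.
Set Implicit Arguments. Unset Strict Implicit. Unset Printing Implicit Defensive.
Import GRing.Theory.
Local Open Scope ring_scope.

Lemma sum_indicator (R : pzSemiRingType) (I : finType) (f : I -> R) i :
  \sum_j (j == i)%:R * f j = f i.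
Proof.
by rewrite (bigD1 i) //= eqxx mul1r big1 ?addr0 // => j /negbTE ->; rewrite mul0r.
Qed.

Section ExteriorSquare.
Variables (F : fieldType) (k : nat).
Implicit Types (x y : 'rV[F]_k) (w : ext2 F k) (g : 'M[F]_k) (i j : 'I_k) (q r : spair k).

Lemma escaleE a w q : (a `*e` w) q = a * w q.
Proof. by rewrite ffunE. Qed.

Lemma wedgeE x y q :
  wedge x y q = x 0 (val q).1 * y 0 (val q).2 - x 0 (val q).2 * y 0 (val q).1.
Proof. by rewrite ffunE. Qed.

Lemma wedgeC x y : wedge y x = - wedge x y.
Proof. by apply/ffunP => q; rewrite !ffunE; ring. Qed.

Lemma wedgexx x : wedge x x = 0.
Proof. by apply/ffunP => q; rewrite !ffunE; ring. Qed.

Lemma bvecE i j : bvec i 0 j = (j == i)%:R :> F.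
Proof. by rewrite mxE eqxx. Qed.

Lemma bvec_mulmx i g : bvec i *m g = row i g.
Proof. by rewrite rowE. Qed.

Lemma wedge_bvec_lt i j : (i < j)%N ->
  forall q, wedge (bvec i) (bvec j) q = (val q == (i, j))%:R :> F.
Proof.
move=> ij [[a b'] ab] /=; rewrite wedgeE !bvecE /= xpair_eqE.
have [eb|_] := eqVneq b' i; last by rewrite mul0r subr0 -natrM mulnb.
have /negbTE -> : a != j by rewrite -val_eqE neq_ltn (ltn_trans _ ij) // -eb.
by rewrite mulr0 subr0 -natrM mulnb.
Qed.

Lemma hatmapE g w q :
  hatmap g w q = \sum_r w r * wedge (row (val r).1 g) (row (val r).2 g) q.
Proof. by rewrite sum_ffunE; apply: eq_bigr => r _; rewrite ffunE. Qed.

Lemma hatmapD g w1 w2 : hatmap g (w1 + w2) = hatmap g w1 + hatmap g w2.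
Proof.
apply/ffunP => q; rewrite ffunE !hatmapE -big_split.
by apply: eq_bigr => r _; rewrite ffunE mulrDl.
Qed.

Lemma hatmapN g w : hatmap g (- w) = - hatmap g w.
Proof.
apply/ffunP => q; rewrite ffunE !hatmapE -sumrN.
by apply: eq_bigr => r _; rewrite ffunE mulNr.
Qed.

Lemma hatmap_sum I (s : seq I) (P : pred I) (a : I -> F) (W : I -> ext2 F k) g :
  hatmap g (\sum_(i <- s | P i) a i `*e` W i) = \sum_(i <- s | P i) a i `*e` hatmap g (W i).
Proof.
apply/ffunP => q; rewrite hatmapE !sum_ffunE.
under eq_bigr do rewrite sum_ffunE mulr_suml.
rewrite exchange_big; apply: eq_bigr => i _.
by rewrite escaleE hatmapE mulr_sumr; apply: eq_bigr => r _; rewrite escaleE mulrA.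
Qed.

Lemma hatmap_wedge_bvec g i j :
  hatmap g (wedge (bvec i) (bvec j)) = wedge (row i g) (row j g).
Proof.
wlog ij : i j / (i <= j)%N.
  move=> IH; have [/IH //|/ltnW ji] := leqP i j.
  by rewrite wedgeC hatmapN IH // -wedgeC.
have [eij|lt_ij] := eqVneq i j.
  rewrite eij !wedgexx.
  by apply/ffunP => q; rewrite hatmapE ffunE big1 // => r _; rewrite ffunE mul0r.
have {lt_ij} ij : (i < j)%N by rewrite ltn_neqAle lt_ij.
apply/ffunP => q; rewrite hatmapE.
pose q0 : spair k := exist _ (i, j) ij.
under eq_bigr do rewrite wedge_bvec_lt // -[(i, j)]/(val q0) val_eqE.
exact: sum_indicator (fun r => wedge (row (val r).1 g) (row (val r).2 g) q) q0.
Qed.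

End ExteriorSquare.

Section Skew.
Variables (F : fieldType) (k : nat).
Implicit Types (x : 'rV[F]_k) (w : ext2 F k) (i j s : 'I_k).

(* [w] read as an alternating form: [skew w i j] is [w (i, j)] if [i < j],
   [- w (j, i)] if [j < i] and [0] if [i = j]. *)
Definition skew w i j : F :=
  odflt 0 (omap w (insub (i, j))) - odflt 0 (omap w (insub (j, i))).

Lemma skew_wedge x y i j : skew (wedge x y) i j = x 0 i * y 0 j - x 0 j * y 0 i.
Proof.
rewrite /skew; case: insubP => [q /= ij qE|nij]; case: insubP => [r /= ji rE|nji] /=.
- by have := ltn_trans ij ji; rewrite ltnn.
- by rewrite wedgeE /= qE subr0.
- by rewrite wedgeE /= rE sub0r opprB.
by move: nij nji => /=; case: ltngtP => // /val_inj ->; rewrite !subrr.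
Qed.

Lemma skew_escale a w i j : skew (a `*e` w) i j = a * skew w i j.
Proof.
rewrite /skew mulrBr; congr (_ - _).
  by case: insubP => [q _ _|_] /=; rewrite ?escaleE ?mulr0.
by case: insubP => [q _ _|_] /=; rewrite ?escaleE ?mulr0.
Qed.

Lemma exists_two_others s : (2 < k)%N ->
  exists t1 t2 : 'I_k, [/\ t1 != s, t2 != s & t1 != t2].
Proof.
move=> k_gt2.
have t1_lt : ((s == 0 :> nat) < k)%N by case: eqP => _; apply: leq_trans _ k_gt2.
have t2_lt : ((if s == 2 :> nat then 1 else 2) < k)%N by case: eqP => _; apply: leq_trans _ k_gt2.
by exists (Ordinal t1_lt), (Ordinal t2_lt); rewrite -!val_eqE /=;
  case: s {t1_lt t2_lt} => [[|[|[|s]]] ?].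
Qed.

Lemma wedge_bvec_propto_eq0 x w : (2 < k)%N ->
  (forall t, exists mu, wedge x (bvec t) = mu `*e` w) -> x = 0.
Proof.
move=> k_gt2 propto; apply/rowP => s; rewrite mxE; apply/eqP; apply: contraT => xs.
have [t1 [t2 [t1s t2s t12]]] := exists_two_others s k_gt2.
have coord t : exists mu, forall i j,
    x 0 i * (j == t)%:R - x 0 j * (i == t)%:R = mu * skew w i j.
  have [mu E] := propto t; exists mu => i j.
  by rewrite -skew_escale -E skew_wedge !bvecE.
have [mu1 E1] := coord t1; have [mu2 E2] := coord t2.
move: (E1 s t1) (E1 s t2) (E2 s t2).
rewrite !eqxx ![s == _]eq_sym [t2 == _]eq_sym (negbTE t12) (negbTE t1s) (negbTE t2s).
rewrite !mulr0 !subr0 !mulr1 => e1 e2 e3.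
have mu1_neq0 : mu1 != 0 by apply: contraNneq xs => mu0; rewrite e1 mu0 mul0r.
move/esym/eqP: e2; rewrite mulf_eq0 (negbTE mu1_neq0) /= => /eqP w0.
by move/eqP: xs; rewrite e3 w0 mulr0.
Qed.

End Skew.

Local Notation l0 := (lift ord0).

Section Coordinates.
Variables (F : fieldType) (n : nat) (b : 'rV[F]_n) (c : ext2 F n) (A : 'M[F]_n).
Implicit Types (g : 'M[F]_n.+1) (v : 'rV[F]_n.+1) (i j t : 'I_n) (q : spair n).

Lemma spair0_subproof t : ((ord0 : 'I_n.+1) < l0 t)%N.
Proof. by rewrite lift0. Qed.

Lemma spairU_subproof q : (l0 (val q).1 < l0 (val q).2)%N.
Proof. by rewrite !lift0 ltnS (valP q). Qed.

Definition spair0 t : spair n.+1 := exist _ (ord0, l0 t) (spair0_subproof t).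
Definition spairU q : spair n.+1 := exist _ (l0 (val q).1, l0 (val q).2) (spairU_subproof q).

Lemma wedge_bvec0_spairU i q : wedge (bvec ord0) (bvec (l0 i)) (spairU q) = 0 :> F.
Proof. by rewrite wedge_bvec_lt ?lift0 // xpair_eqE eq_sym (negbTE (neq_lift _ _)). Qed.

Lemma wedge_bvec0_spair0 i t : wedge (bvec ord0) (bvec (l0 i)) (spair0 t) = (i == t)%:R :> F.
Proof. by rewrite wedge_bvec_lt ?lift0 // xpair_eqE eqxx (inj_eq lift_inj) eq_sym. Qed.

Lemma fbasis0_spairU q : fbasis b c A ord0 (spairU q) = c q.
Proof.
rewrite /fbasis unlift_none ffunE !sum_ffunE big1 ?add0r; last first.
  by move=> i _; rewrite escaleE wedge_bvec0_spairU mulr0.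
rewrite -[RHS](sum_indicator (fun r => c r) q); apply: eq_bigr => r _.
rewrite escaleE wedge_bvec_lt ?lift0 ?ltnS ?(valP r) // mulrC /= !xpair_eqE.
by rewrite !(inj_eq lift_inj) -xpair_eqE -!surjective_pairing eq_sym val_eqE.
Qed.

Lemma fbasis0_spair0 t : fbasis b c A ord0 (spair0 t) = b 0 t.
Proof.
rewrite /fbasis unlift_none ffunE !sum_ffunE [X in _ + X]big1 ?addr0; last first.
  move=> r _; rewrite escaleE wedge_bvec_lt ?lift0 ?ltnS ?(valP r) // xpair_eqE.
  by rewrite (negbTE (neq_lift _ _)) mulr0.
under eq_bigr do rewrite escaleE wedge_bvec0_spair0 mulrC.
exact: sum_indicator.
Qed.

Lemma fbasisU_spairU i q : fbasis b c A (l0 i) (spairU q) = 0.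
Proof.
rewrite /fbasis liftK sum_ffunE big1 // => j _.
by rewrite escaleE wedge_bvec0_spairU mulr0.
Qed.

Lemma fbasisU_spair0 i t : fbasis b c A (l0 i) (spair0 t) = A i t.
Proof.
rewrite /fbasis liftK sum_ffunE; under eq_bigr do rewrite escaleE wedge_bvec0_spair0 mulrC.
exact: sum_indicator.
Qed.

Lemma hatmap_fbasis0 g : hatmap g (fbasis b c A ord0) =
  \sum_i b 0 i `*e` wedge (row ord0 g) (row (l0 i) g) +
  \sum_q c q `*e` wedge (row (l0 (val q).1) g) (row (l0 (val q).2) g).
Proof.
rewrite /fbasis unlift_none hatmapD !hatmap_sum.
by congr (_ + _); apply: eq_bigr => ? _; rewrite hatmap_wedge_bvec.
Qed.

Lemma hatmap_fbasisU g i : hatmap g (fbasis b c A (l0 i)) =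
  \sum_j A i j `*e` wedge (row ord0 g) (row (l0 j) g).
Proof. by rewrite /fbasis liftK hatmap_sum; apply: eq_bigr => j _; rewrite hatmap_wedge_bvec. Qed.

Lemma fmap_coord v r : fmap b c A v r =
  v 0 ord0 * fbasis b c A ord0 r + \sum_i v 0 (l0 i) * fbasis b c A (l0 i) r.
Proof.
rewrite /fmap sum_ffunE big_ord_recl escaleE.
by congr (_ + _); apply: eq_bigr => i _; rewrite escaleE.
Qed.

Lemma hatmap_fmap_coord g v r : hatmap g (fmap b c A v) r =
  v 0 ord0 * hatmap g (fbasis b c A ord0) r +
  \sum_i v 0 (l0 i) * \sum_j A i j * wedge (row ord0 g) (row (l0 j) g) r.
Proof.
rewrite /fmap hatmap_sum sum_ffunE big_ord_recl escaleE.
congr (_ + _); apply: eq_bigr => i _.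
by rewrite escaleE hatmap_fbasisU sum_ffunE; congr (_ * _); apply: eq_bigr => j _; rewrite escaleE.
Qed.

End Coordinates.

Section Tail.
Variables (F : fieldType) (n : nat).
Implicit Types (x y : 'rV[F]_n.+1) (g h : 'M[F]_n.+1).

Definition tailv x : 'rV[F]_n := \row_j x 0 (l0 j).

Definition liftv (u : 'rV[F]_n) : 'rV[F]_n.+1 := \row_k oapp (u 0) 0 (unlift ord0 k).

Definition blockU g : 'M[F]_n := \matrix_(i, j) g (l0 i) (l0 j).

Lemma wedge_spairU x y q : wedge x y (spairU q) = wedge (tailv x) (tailv y) q.
Proof. by rewrite !wedgeE !mxE. Qed.

Lemma liftv0 u : liftv u 0 ord0 = 0.
Proof. by rewrite mxE unlift_none. Qed.

Lemma liftvU u i : liftv u 0 (l0 i) = u 0 i.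
Proof. by rewrite mxE liftK. Qed.

Lemma tailv_bvec i : tailv (bvec (l0 i)) = bvec i.
Proof. by apply/rowP => j; rewrite !mxE (inj_eq lift_inj). Qed.

Lemma blockU1 : blockU 1%:M = 1%:M.
Proof. by apply/matrixP => i j; rewrite !mxE (inj_eq lift_inj). Qed.

Lemma blockU_mul g h : (forall i : 'I_n, g (l0 i) ord0 = 0) ->
  blockU (g *m h) = blockU g *m blockU h.
Proof.
move=> g_col0; apply/matrixP => i j; rewrite !mxE big_ord_recl g_col0 mul0r add0r.
by apply: eq_bigr => k _; rewrite !mxE.
Qed.

Section FirstColumnZero.
Variable g : 'M[F]_n.+1.
Hypothesis g_col0 : forall i : 'I_n, g (l0 i) ord0 = 0.

Lemma corner_neq0 : g \in unitmx -> g ord0 ord0 != 0.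
Proof.
move=> g_unit; apply/eqP => g00.
have := congr1 (fun M : 'M_n.+1 => M ord0 ord0) (mulVmx g_unit).
rewrite /= !mxE big_ord_recl g00 mulr0 add0r big1 => [/eqP|i _]; last by rewrite g_col0 mulr0.
by rewrite eq_sym oner_eq0.
Qed.

Lemma blockU_unit : g \in unitmx -> blockU g \in unitmx.
Proof.
move=> g_unit; suff /mulmx1_unit[] : blockU g *m blockU (invmx g) = 1%:M by [].
by rewrite -blockU_mul // mulmxV // blockU1.
Qed.

Lemma block_diag_eq1 : (forall j : 'I_n, g ord0 (l0 j) = 0) -> g ord0 ord0 = 1 ->
  blockU g = 1%:M -> g = 1%:M.
Proof.
move=> g_row0 g00 gU; apply/matrixP => i j; rewrite !mxE.
case: (unliftP ord0 i) => [i' ->|->]; case: (unliftP ord0 j) => [j' ->|->].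
- by have := congr1 (fun M : 'M_n => M i' j') gU; rewrite !mxE (inj_eq lift_inj) => ->.
- by rewrite g_col0 eq_sym (negbTE (neq_lift _ _)).
- by rewrite g_row0 (negbTE (neq_lift _ _)).
- by rewrite g00 eqxx.
Qed.

End FirstColumnZero.

End Tail.

Section Equivariance.
Variables (F : fieldType) (n : nat) (b : 'rV[F]_n) (c : ext2 F n) (A : 'M[F]_n).
Variable g : 'M[F]_n.+1.
Hypothesis equiv_g : forall v, fmap b c A (v *m g) = hatmap g (fmap b c A v).
Implicit Types (v y : 'rV[F]_n.+1) (i j s t : 'I_n) (q : spair n).

Lemma equiv_spairU v q :
  (v *m g) 0 ord0 * c q = v 0 ord0 * hatmap g (fbasis b c A ord0) (spairU q) +
  \sum_i v 0 (l0 i) * \sum_j A i j * wedge (row ord0 g) (row (l0 j) g) (spairU q).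
Proof.
have := congr1 (fun w : ext2 F n.+1 => w (spairU q)) (equiv_g v).
rewrite /= fmap_coord hatmap_fmap_coord fbasis0_spairU big1 ?addr0 // => i _.
by rewrite fbasisU_spairU mulr0.
Qed.

Lemma equiv_spair0 v t :
  (v *m g) 0 ord0 * b 0 t + \sum_i (v *m g) 0 (l0 i) * A i t =
  v 0 ord0 * hatmap g (fbasis b c A ord0) (spair0 t) +
  \sum_i v 0 (l0 i) * \sum_j A i j * wedge (row ord0 g) (row (l0 j) g) (spair0 t).
Proof.
have := congr1 (fun w : ext2 F n.+1 => w (spair0 t)) (equiv_g v).
rewrite /= fmap_coord hatmap_fmap_coord fbasis0_spair0 => <-.
by congr (_ + _); apply: eq_bigr => i _; rewrite fbasisU_spair0.
Qed.

(* Use [v = liftv u] where [u A] is the [U]-part of [w = y g^-1]; the rest [w_0 (row ord0 g)]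
   of [y] is irrelevant since its wedge with [row ord0 g] vanishes. *)
Lemma tail_row0_wedge_propto : g \in unitmx -> A \in unitmx ->
  forall y, exists mu, wedge (tailv (row ord0 g)) (tailv y) = mu `*e` c.
Proof.
move=> g_unit A_unit y; pose w := y *m invmx g; pose u := tailv w *m invmx A.
have y_def k : y 0 k = w 0 ord0 * g ord0 k + \sum_j (u *m A) 0 j * g (l0 j) k.
  rewrite -[y](mulmxKV g_unit) mxE big_ord_recl; congr (_ + _).
  by apply: eq_bigr => j _; rewrite /u mulmxKV // [tailv _ _ _]mxE.
exists ((liftv u *m g) 0 ord0); apply/ffunP => q; rewrite escaleE.
rewrite equiv_spairU liftv0 mul0r add0r; under eq_bigr do rewrite liftvU.
have -> : \sum_i u 0 i * \sum_j A i j * wedge (row ord0 g) (row (l0 j) g) (spairU q) =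
          \sum_j (u *m A) 0 j * wedge (row ord0 g) (row (l0 j) g) (spairU q).
  under eq_bigr do rewrite mulr_sumr.
  rewrite exchange_big; apply: eq_bigr => j _; rewrite mxE mulr_suml.
  by apply: eq_bigr => i _; rewrite mulrA.
rewrite wedgeE !mxE !y_def.
set a := l0 (val q).1; set a' := l0 (val q).2.
rewrite [RHS](eq_bigr (fun j => g ord0 a * ((u *m A) 0 j * g (l0 j) a') -
                                g ord0 a' * ((u *m A) 0 j * g (l0 j) a))); last first.
  by move=> j _; rewrite wedge_spairU wedgeE !mxE; ring.
by rewrite sumrB -!mulr_sumr; ring.
Qed.

Lemma row0_tail_eq0 : g \in unitmx -> A \in unitmx -> (2 < n)%N ->
  forall s, g ord0 (l0 s) = 0.
Proof.
move=> g_unit A_unit n_gt2 s.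
suff /rowP/(_ s) : tailv (row ord0 g) = 0 by rewrite !mxE.
apply: (wedge_bvec_propto_eq0 (w := c) n_gt2) => t.
by rewrite -tailv_bvec; exact: tail_row0_wedge_propto.
Qed.

Section BlockDiagonal.
Hypothesis g_row0 : forall s, g ord0 (l0 s) = 0.

Lemma col0_eq0 : c != 0 -> forall i, g (l0 i) ord0 = 0.
Proof.
move=> c_neq0 i; have [q cq_neq0] : exists q, c q != 0.
  apply/existsP; apply: contraNT c_neq0 => /existsPn c0.
  by apply/eqP/ffunP => q; rewrite ffunE; apply/eqP/negPn/c0.
have := equiv_spairU (bvec (l0 i)) q.
rewrite bvec_mulmx bvecE (negbTE (neq_lift _ _)) mul0r add0r.
rewrite big1 => [/eqP|j _]; last first.
  by rewrite big1 ?mulr0 // => k _; rewrite wedgeE /= !mxE !g_row0 !mul0r subrr mulr0.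
by rewrite mxE mulf_eq0 (negbTE cq_neq0) orbF => /eqP.
Qed.

Hypothesis g_col0 : forall i, g (l0 i) ord0 = 0.

Lemma wedge_row0_spair0 j t :
  wedge (row ord0 g) (row (l0 j) g) (spair0 t) = g ord0 ord0 * blockU g j t.
Proof. by rewrite wedgeE /= !mxE g_row0 g_col0 mul0r subr0. Qed.

Lemma blockU_semicommute : blockU g *m A = g ord0 ord0 *: (A *m blockU g).
Proof.
apply/matrixP => i t; have := equiv_spair0 (bvec (l0 i)) t.
rewrite bvec_mulmx bvecE (negbTE (neq_lift _ _)) !mxE g_col0 !mul0r !add0r.
under [in RHS]eq_bigr do rewrite bvecE (inj_eq lift_inj).
rewrite sum_indicator => E; rewrite (eq_bigr (fun j => row (l0 i) g 0 (l0 j) * A j t)).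
  by rewrite E mulr_sumr; apply: eq_bigr => j _; rewrite wedge_row0_spair0 mulrCA.
by move=> j _; rewrite !mxE.
Qed.

Lemma b_blockU : g ord0 ord0 != 0 -> b *m blockU g = b.
Proof.
move=> g00_neq0; apply/rowP => t; apply: (mulfI g00_neq0).
have hat0 : hatmap g (fbasis b c A ord0) (spair0 t) = g ord0 ord0 * (b *m blockU g) 0 t.
  rewrite hatmap_fbasis0 ffunE !sum_ffunE [X in _ + X]big1 ?addr0; last first.
    by move=> q _; rewrite escaleE wedgeE /= !mxE !g_col0 mul0r mulr0 subrr mulr0.
  by rewrite mxE mulr_sumr; apply: eq_bigr => i _; rewrite escaleE wedge_row0_spair0 mulrCA.
have := equiv_spair0 (bvec ord0) t; rewrite hat0 bvec_mulmx bvecE eqxx mul1r.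
rewrite [X in _ + X = _]big1 => [|i _]; last by rewrite mxE g_row0 mul0r.
rewrite [X in _ = _ + X]big1 => [|i _]; last by rewrite bvecE eq_sym (negbTE (neq_lift _ _)) mul0r.
by rewrite !addr0 mxE => ->.
Qed.

End BlockDiagonal.

End Equivariance.

Section PrimitiveElement.
Variables (p : nat) (p_prime : prime p) (L : fieldExtType 'F_p) (alpha : L).
Hypothesis alpha_gen : forall x : L, x != 0 -> exists k : nat, x = alpha ^+ k.
Local Notation d := (\dim {:L}).

Lemma fieldExt_card_lt_size (P : {poly L}) : P != 0 -> (forall x, root P x) ->
  (p ^ d < size P)%N.
Proof.
move=> P_neq0 P_root.
pose xs := map (passmx.vecof (vbasis {:L})) (enum 'rV['F_p]_d).
have := max_poly_roots P_neq0 (rs := xs).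
rewrite size_map -cardT card_mx card_Fp // mul1n; apply; first exact/allP.
by rewrite map_inj_uniq ?enum_uniq //; apply: can_inj (passmx.vecofK (vbasisP _)).
Qed.

(* Every element of [L] is a root of ['X^(e.+1) - 'X]. *)
Lemma primitive_order_ge e : (0 < e)%N -> alpha ^+ e = 1 -> (p ^ d <= e.+1)%N.
Proof.
move=> e_gt0 alpha_e.
have size_P : size ('X^(e.+1) - 'X : {poly L}) = e.+2.
  by rewrite size_polyDl ?size_polyXn // size_polyN size_polyX ltnS.
rewrite -ltnS -size_P fieldExt_card_lt_size // => [|x]; first by rewrite -size_poly_gt0 size_P.
rewrite /root !hornerE; have [->|/alpha_gen[j ->]] := eqVneq x 0; first by rewrite expr0n subrr.
by rewrite -exprM mulnSr exprD mulnC exprM alpha_e expr1n mul1r subrr.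
Qed.

Hypothesis alpha_neq0 : alpha != 0.
Variables (m : {poly 'F_p}) (m_minPoly : map_poly (in_alg L) m = minPoly 1%AS alpha).
Local Notation mL := (map_poly (in_alg L) m).

Lemma root_minPoly_frobenius k : root mL (alpha ^+ (p ^ k)).
Proof.
have pL : p \in [pchar L] := rmorph_pchar (in_alg L) (pchar_Fp p_prime).
have Fp_fix (a : 'F_p) : a ^+ p = a by rewrite -[in X in a ^+ X](card_Fp p_prime) expf_card.
have frob_m : map_poly (pFrobenius_aut pL) mL = mL.
  rewrite -map_poly_comp; apply: eq_map_poly => a /=.
  by rewrite pFrobenius_autE -[a%:A]/(in_alg L a) -rmorphXn Fp_fix.
elim: k => [|k IH]; first by rewrite expn0 expr1 m_minPoly root_minPoly.
move/rootP: IH => IH; apply/rootP.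
by rewrite expnSr exprM -(pFrobenius_autE pL) -{1}frob_m horner_map IH rmorph0.
Qed.

Lemma frobenius_powers_uniq : uniq [seq alpha ^+ (p ^ k) | k <- iota 0 d].
Proof.
rewrite map_inj_in_uniq ?iota_uniq //.
suff lt_neq j k : (j < k < d)%N -> alpha ^+ (p ^ j) != alpha ^+ (p ^ k).
  move=> j k; rewrite !mem_iota !add0n /= => jd kd.
  case: (ltngtP j k) => [jk|kj|//] E; first by move: (lt_neq j k); rewrite jk kd E eqxx => /(_ isT).
  by move: (lt_neq k j); rewrite kj jd E eqxx => /(_ isT).
move=> /andP[jk kd]; apply/eqP => E.
have p_gt1 := prime_gt1 p_prime.
have le_pjk : (p ^ j <= p ^ k)%N by rewrite leq_pexp2l ?(ltnW jk) // ltnW.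
have pos : (0 < p ^ k - p ^ j)%N by rewrite subn_gt0 ltn_exp2l.
have alpha1 : alpha ^+ (p ^ k - p ^ j) = 1.
  apply: (mulfI (expf_neq0 (p ^ j) alpha_neq0)).
  by rewrite -exprD subnKC // mulr1 E.
have := primitive_order_ge pos alpha1.
have : (p ^ k < p ^ d)%N by rewrite ltn_exp2l.
have : (0 < p ^ j)%N by rewrite expn_gt0 ltnW.
lia.
Qed.

Lemma minPoly_roots_frobenius x : size m = d.+1 -> root mL x ->
  exists2 k, (k < d)%N & x = alpha ^+ (p ^ k).
Proof.
move=> size_m root_x; pose xs := [seq alpha ^+ (p ^ k) | k <- iota 0 d].
suff : x \in xs by case/mapP => k; rewrite mem_iota add0n; exists k.
apply: contraT => x_notin.
have mL_neq0 : mL != 0 by rewrite map_poly_eq0 -size_poly_gt0 size_m.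
have := max_poly_roots mL_neq0 (rs := x :: xs).
rewrite size_map_poly size_m /= size_map size_iota ltnn root_x x_notin frobenius_powers_uniq.
by apply => //; apply/allP => y /mapP[k _ ->]; exact: root_minPoly_frobenius.
Qed.

Lemma minPoly_root_scalar (lam : 'F_p) : size m = d.+1 -> lam != 0 ->
  root mL (lam%:A * alpha) -> lam = 1.
Proof.
move=> size_m lam_neq0 /(minPoly_roots_frobenius size_m)[[|k] kd E].
  move: E; rewrite expn0 expr1 -{2}(mul1r alpha) => /(mulIf alpha_neq0) /eqP.
  by rewrite -[lam%:A]/(in_alg L lam) fmorph_eq1 => /eqP.
(* Otherwise [alpha ^+ (p ^ k.+1).-1 = lam%:A] with [lam ^+ p.-1 = 1], so the order
   of [alpha] is at most [(p ^ k.+1).-1 * p.-1 < (p ^ d).-1]. *)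
have p_gt1 := prime_gt1 p_prime.
have lam_p1 : lam ^+ p.-1 = 1.
  apply: (mulIf lam_neq0); rewrite -exprSr prednK ?(ltnW p_gt1) // mul1r.
  by rewrite -[in X in _ ^+ X](card_Fp p_prime) expf_card.
have alpha_pk : alpha ^+ (p ^ k.+1).-1 = lam%:A.
  by apply: (mulIf alpha_neq0); rewrite -exprSr prednK ?expn_gt0 ?(ltnW p_gt1).
have pos : (0 < (p ^ k.+1).-1 * p.-1)%N.
  by rewrite muln_gt0 -!subn1 !subn_gt0 p_gt1 andbT -{1}(expn0 p) ltn_exp2l.
have := primitive_order_ge pos.
rewrite exprM alpha_pk -[lam%:A]/(in_alg L lam) -rmorphXn lam_p1 rmorph1 => /(_ erefl).
have : (p ^ k.+1 * p <= p ^ d)%N by rewrite -expnSr leq_pexp2l ?(ltnW p_gt1).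
have : (p <= p ^ k.+1)%N by rewrite -{1}(expn1 p) leq_pexp2l ?(ltnW p_gt1).
nia.
Qed.

End PrimitiveElement.

Section CompanionAlgebra.
Variables (p : nat) (L : fieldExtType 'F_p) (alpha : L).
Hypothesis alpha_gen : forall x : L, x != 0 -> exists k : nat, x = alpha ^+ k.
Variables (m : {poly 'F_p}) (m_minPoly : map_poly (in_alg L) m = minPoly 1%AS alpha).
Variables (k : nat) (A : 'M['F_p]_k.+1) (A_root : horner_mx A m = 0).

Definition evalpha (q : {poly 'F_p}) : L := (map_poly (in_alg L) q).[alpha].

Lemma evalpha_eq0_dvdp q : evalpha q = 0 -> m %| q.
Proof.
move=> q_alpha; rewrite -(dvdp_map (in_alg L)) m_minPoly.
by apply: minPoly_dvdp; [apply/polyOver1P; exists q | exact/rootP].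
Qed.

Lemma evalphaX : evalpha 'X = alpha.
Proof. by rewrite /evalpha map_polyX hornerX. Qed.

Lemma size_minPoly_neq0 : (2 < size m)%N -> alpha != 0.
Proof.
move=> size_m; apply/eqP => alpha0.
have /(dvdp_leq (negbT (polyX_eq0 _))) := evalpha_eq0_dvdp (etrans evalphaX alpha0).
by rewrite size_polyX leqNgt size_m.
Qed.

(* The inverse of [evalpha q] is a power [alpha ^+ j], so [m] divides [q 'X^j - 1]. *)
Lemma horner_mx_unit q : evalpha q != 0 -> horner_mx A q \in unitmx.
Proof.
move=> q_alpha; have [j alpha_j] := alpha_gen (invr_neq0 q_alpha).
have /dvdpP[t def_q] : m %| q * 'X^j - 1.
  apply: evalpha_eq0_dvdp; rewrite /evalpha rmorphB rmorphM /= map_polyXn rmorph1.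
  by rewrite !hornerE -alpha_j mulfV // subrr.
have : horner_mx A (q * 'X^j - 1) = 0 by rewrite def_q rmorphM /= A_root mulr0.
rewrite rmorphB rmorphM rmorph1 /= rmorphXn /= horner_mx_X => /eqP.
by rewrite subr_eq0 => /eqP/mulmx1_unit[].
Qed.

Lemma root_mx_unit : alpha != 0 -> A \in unitmx.
Proof. by move=> alpha_neq0; rewrite -[A]horner_mx_X horner_mx_unit ?evalphaX. Qed.

Lemma horner_mx_eq0_evalpha q : horner_mx A q = 0 -> evalpha q = 0.
Proof.
move=> qA0; apply/eqP; apply: contraT => /horner_mx_unit.
by rewrite qA0 unitmxE det0 unitr0.
Qed.

Lemma horner_mx_semicommute B lam : B *m A = lam *: (A *m B) ->
  forall q, B *m horner_mx A q = horner_mx (lam *: A) q *m B.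
Proof.
move=> BA; elim/poly_ind => [|q a IH]; first by rewrite !rmorph0 mulmx0 mul0mx.
rewrite !mulmxE in BA IH *.
rewrite !rmorphD !rmorphM /= !horner_mx_X !horner_mx_C mulrDr mulrDl mulrA IH.
by rewrite -!mulrA BA scalerAl; congr (_ + _); exact: scalar_mxC.
Qed.

Lemma horner_mx_scaleX lam q : horner_mx A (q \Po (lam *: 'X)) = horner_mx (lam *: A) q.
Proof.
elim/poly_ind: q => [|q a IH]; first by rewrite comp_poly0 !rmorph0.
rewrite comp_polyD comp_polyM comp_polyX comp_polyC !rmorphD !rmorphM /= IH.
rewrite !horner_mx_C horner_mx_X -mul_polyC rmorphM /= horner_mx_C horner_mx_X.
by congr (_ * _ + _); exact: mul_scalar_mx.
Qed.

(* [B] conjugates [A] to [lam *: A], so [m] also annihilates [lam *: A]. *)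
Lemma semicommute_root B lam : B \in unitmx -> B *m A = lam *: (A *m B) ->
  root (map_poly (in_alg L) m) (lam%:A * alpha).
Proof.
move=> B_unit BA; apply/rootP.
have m_lamA : horner_mx (lam *: A) m = 0.
  have := horner_mx_semicommute BA m; rewrite A_root mulmx0 => /esym/(congr1 (mulmx^~ (invmx B))).
  by rewrite /= mulmxK // mul0mx.
have := horner_mx_eq0_evalpha (etrans (horner_mx_scaleX lam m) m_lamA).
by rewrite /evalpha map_comp_poly horner_comp map_polyZ map_polyX hornerZ hornerX.
Qed.

(* Any nonzero [b] is a cyclic vector for [A]: the Krylov matrix of [b] is invertible. *)
Lemma commute_fix_eq1 B (b : 'rV['F_p]_k.+1) : size m = k.+2 ->
  B *m A = A *m B -> b *m B = b -> b != 0 -> B = 1%:M.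
Proof.
move=> size_m BA bB b_neq0.
pose M : 'M['F_p]_k.+1 := \matrix_(i < k.+1) (b *m A ^+ i).
have M_unit : M \in unitmx.
  rewrite unitmxE unitfE; apply/negP => /det0P [z z_neq0 zM].
  pose q := \poly_(i < k.+1) z 0 (inord i).
  have bq : b *m horner_mx A q = 0.
    rewrite -zM (mulmx_sum_row z) /q poly_def rmorph_sum mulmx_sumr; apply: eq_bigr => i _.
    rewrite rowK -mul_polyC rmorphM /= horner_mx_C rmorphXn /= horner_mx_X inord_val -mulmxE.
    by rewrite mul_scalar_mx scalemxAr.
  have /evalpha_eq0_dvdp m_q : evalpha q = 0.
    apply/eqP; apply: contraNT b_neq0 => /horner_mx_unit qA_unit; apply/eqP.
    by rewrite -[b](mulmxK qA_unit) bq mul0mx.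
  have q_neq0 : q != 0.
    apply: contra z_neq0 => /eqP q0; apply/eqP/rowP => i; rewrite mxE.
    by have := coef_poly k.+1 (fun i => z 0 (inord i)) i; rewrite -/q q0 coef0 ltn_ord inord_val.
  have := leq_trans (dvdp_leq q_neq0 m_q) (size_poly k.+1 (fun i => z 0 (inord i))).
  by rewrite size_m ltnn.
suff : M *m (B - 1%:M) = 0.
  by move/(congr1 (mulmx (invmx M))); rewrite mulKmx // mulmx0 => /eqP; rewrite subr_eq0 => /eqP.
apply/row_matrixP => i; rewrite row_mul rowK row0 mulmxBr mulmx1 -mulmxA.
have -> : A ^+ i *m B = B *m A ^+ i by exact: esym (commrX i (BA : GRing.comm B A)).
by rewrite mulmxA bB subrr.
Qed.

End CompanionAlgebra.

Lemma castmx_companion_root (R : comNzRingType) (m : {poly R}) d (e : (size m).-1 = d.+1) :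
  m \is monic -> horner_mx (castmx (e, e) (companionmx m)) m = 0.
Proof.
move=> m_monic; have char_m d' (e' : (size m).-1 = d') :
    char_poly (castmx (e', e') (companionmx m)) = m.
  by case: d' / e'; rewrite castmx_id companionmxK.
by have := Cayley_Hamilton (castmx (e, e) (companionmx m)); rewrite char_m.
Qed.

Unset Implicit Arguments.
Set Strict Implicit.

Theorem mainTheorem1
  (p : nat) (hp : prime p) (n : nat) (hn : (2 < n)%N)
  (L : fieldExtType 'F_p) (hL : \dim {:L} = n)
  (alpha : L) (halpha : forall x : L, x != 0 -> exists k : nat, x = alpha ^+ k)
  (m : {poly 'F_p}) (hm : map_poly (in_alg L) m = minPoly 1%AS alpha)
  (hsz : (size m).-1 = n)
  (b : 'rV['F_p]_n) (hb : b != 0)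
  (c : {ffun spair n -> 'F_p}) (hc : c != 0) :
  let A : 'M['F_p]_n := castmx (hsz, hsz) (companionmx m) in
  forall g : 'M['F_p]_n.+1, g \in unitmx ->
    (forall v : 'rV['F_p]_n.+1, fmap b c A (v *m g) = hatmap g (fmap b c A v)) ->
    g = 1%:M.
Proof.
case: n hn hL hsz b hb c hc => [//|n] n_gt2 dimL size_m b b_neq0 c c_neq0 A g g_unit equiv_g.
have m_monic : m \is monic by rewrite -(map_monic (in_alg L)) hm monic_minPoly.
have A_root : horner_mx A m = 0 by apply: castmx_companion_root.
have size_m2 : size m = n.+2 by rewrite -[size m]prednK ?size_m // size_poly_gt0 monic_neq0.
have alpha_neq0 : alpha != 0 by rewrite (size_minPoly_neq0 hm) // size_m2 ltnS ltnW.
have A_unit := root_mx_unit halpha hm A_root alpha_neq0.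
have g_row0 := row0_tail_eq0 equiv_g g_unit A_unit n_gt2.
have g_col0 := col0_eq0 equiv_g g_row0 c_neq0.
have g00_neq0 := corner_neq0 g_col0 g_unit.
have BA := blockU_semicommute equiv_g g_row0 g_col0.
have g00 : g ord0 ord0 = 1.
  apply: (minPoly_root_scalar hp halpha alpha_neq0 hm); rewrite ?dimL //.
  exact (semicommute_root halpha hm A_root (blockU_unit g_col0 g_unit) BA).
rewrite g00 scale1r in BA.
apply: (block_diag_eq1 g_col0 g_row0 g00).
exact (commute_fix_eq1 halpha hm A_root size_m2 BA (b_blockU equiv_g g_row0 g_col0 g00_neq0) b_neq0).
Qed.
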